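(* Let $X\subset\mathbb{C}^n$ be an unbounded complex algebraic subset whose tangent cone at infinity $C_\infty(X)$ is a complex linear subspace, and let $\pi\colon\mathbb{C}^n\to C_\infty(X)$ be the orthogonal projection. If $\gamma\colon(\varepsilon,+\infty)\to X$ is an arc with $\lim_{t\to+\infty}\|\gamma(t)\|=+\infty$ and $\pi(\gamma(t))=tv+o_\infty(t)$ for some $v\in C_\infty(X)$, then $\gamma(t)=tv+o_\infty(t)$.
   Context: For an unbounded $X\subset\mathbb{R}^m$, a set $E$ is a tangent cone of $X$ at infinity if there exist positive reals $t_j\to+\infty$ and $D\subset\mathbb{S}^{m-1}$ with $D$ the Hausdorff limit of $\frac{1}{t_j}(X\cap\{\|x\|=t_j\})$ and $E=\{tv:v\in D,t\ge0\}$; for algebraic sets it is unique and denoted $C_\infty(X)$. The notation $g(t)=o_\infty(t)$ means $\lim_{t\to+\infty}g(t)/t=0$. *)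

From mathcomp Require Import all_boot.
From Stdlib Require Import Reals.
Set Implicit Arguments.
Unset Strict Implicit.

Local Open Scope R_scope.

Definition C := (R * R)%type.
Definition C0 : C := (0, 0).
Definition Cadd (a b : C) : C := (fst a + fst b, snd a + snd b).
Definition Cmul (a b : C) : C :=
  (fst a * fst b - snd a * snd b, fst a * snd b + snd a * fst b).

Definition Cn (n : nat) := 'I_n -> C.

Definition vzero n : Cn n := fun _ => C0.
Definition vadd n (x y : Cn n) : Cn n := fun i => Cadd (x i) (y i).
Definition vsub n (x y : Cn n) : Cn n :=
  fun i => (fst (x i) - fst (y i), snd (x i) - snd (y i)).
Definition cscal n (a : C) (x : Cn n) : Cn n := fun i => Cmul a (x i).
Definition rscal n (t : R) (x : Cn n) : Cn n :=
  fun i => (t * fst (x i), t * snd (x i)).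

(* Real part of the Hermitian inner product = Euclidean inner product on R^{2n}. *)
Definition rinner n (x y : Cn n) : R :=
  \big[Rplus/0]_(i < n) (fst (x i) * fst (y i) + snd (x i) * snd (y i)).
Definition vnorm n (x : Cn n) : R := sqrt (rinner x x).

Inductive cpoly : Type :=
| PConst : C -> cpoly
| PVar : nat -> cpoly
| PAdd : cpoly -> cpoly -> cpoly
| PMul : cpoly -> cpoly -> cpoly.

(* Evaluation at z in C^n; variables with index >= n evaluate to 0. *)
Fixpoint ceval n (z : Cn n) (p : cpoly) : C :=
  match p with
  | PConst c => c
  | PVar k => match insub k with Some i => z i | None => C0 end
  | PAdd p q => Cadd (ceval z p) (ceval z q)
  | PMul p q => Cmul (ceval z p) (ceval z q)
  end.

Definition is_complex_algebraic n (X : Cn n -> Prop) : Prop :=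
  exists ps : list cpoly,
    forall z, X z <-> List.Forall (fun p => ceval z p = C0) ps.

Definition unbounded n (X : Cn n -> Prop) : Prop :=
  forall M : R, exists z, X z /\ vnorm z > M.

Definition is_complex_subspace n (L : Cn n -> Prop) : Prop :=
  L (@vzero n) /\
  (forall x y, L x -> L y -> L (vadd x y)) /\
  (forall a x, L x -> L (cscal a x)).

Definition closed_set n (D : Cn n -> Prop) : Prop :=
  forall x, (forall eps, eps > 0 -> exists d, D d /\ vnorm (vsub x d) < eps) -> D x.

Definition hausdorff_limit n (A : nat -> Cn n -> Prop) (D : Cn n -> Prop) : Prop :=
  forall eps, eps > 0 -> exists J : nat, forall j : nat, (J <= j)%nat ->
    (forall a, A j a -> exists d, D d /\ vnorm (vsub a d) < eps) /\
    (forall d, D d -> exists a, A j a /\ vnorm (vsub a d) < eps).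

(* E is a tangent cone of X at infinity (as in the paper: there are t_j -> +oo
   and a (closed) D in the unit sphere, Hausdorff limit of
   (1/t_j)(X ∩ {|x| = t_j}), with E the cone over D). *)
Definition is_tangent_cone_at_infinity n (X E : Cn n -> Prop) : Prop :=
  exists (t : nat -> R) (D : Cn n -> Prop),
    (forall j, t j > 0) /\
    (forall M, exists J : nat, forall j : nat, (J <= j)%nat -> t j > M) /\
    (forall d, D d -> vnorm d = 1) /\
    closed_set D /\
    hausdorff_limit
      (fun j y => exists x, X x /\ vnorm x = t j /\ y = rscal (/ t j) x) D /\
    (forall x, E x <-> exists s v, s >= 0 /\ D v /\ x = rscal s v).

Definition tangent_cone_at_infinity_is n (X E : Cn n -> Prop) : Prop :=
  is_tangent_cone_at_infinity X E /\
  (forall E', is_tangent_cone_at_infinity X E' -> forall x, E' x <-> E x).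

Definition is_orth_projection n (L : Cn n -> Prop) (pi : Cn n -> Cn n) : Prop :=
  forall z, L (pi z) /\ forall w, L w -> rinner (vsub z (pi z)) w = 0.

Definition asymp_linear n (f : R -> Cn n) (v : Cn n) : Prop :=
  forall eps, eps > 0 -> exists T, forall t, t > T ->
    vnorm (vsub (f t) (rscal t v)) <= eps * t.

(* If points x of X with |x| -> oo were not within o(|x|) of L, there would be x_k in X
   with |x_k| -> oo and |x_k - pi x_k| > delta |x_k|. The slices of X through the x_k,
   rescaled to the unit sphere, have a Hausdorff-convergent subsequence (Blaschke
   selection, obtained by rounding the sets to finer and finer grids and a diagonal
   argument), with limit D. The cone over D is a tangent cone at infinity, hence equals L
   by uniqueness; but x_k / |x_k| is delta-close to D, so x_k is delta |x_k|-close to L.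
   Once |gamma - pi gamma| = o(|gamma|), the bound |pi gamma - t v| = o(t) gives
   |gamma| = O(t) and then gamma(t) = t v + o(t). *)

From HB Require Import structures.
From Stdlib Require Import ZArith Lia.
From Pilot Require Import Defs.
From mathcomp Require Import all_boot.
From Stdlib Require Import Reals Lra Psatz ClassicalEpsilon FunctionalExtensionality Classical.
Local Open Scope R_scope.
Set Implicit Arguments.
Set Warnings "-notation-overridden -redundant-canonical-projection".

HB.instance Definition _ := Monoid.isComLaw.Build R 0 Rplus
  (fun x y z => esym (Rplus_assoc x y z)) Rplus_comm Rplus_0_l.

Lemma sumR_const m c : \big[Rplus/0]_(i < m) c = INR m * c.
Proof.
elim: m => [|m IH]; first by rewrite big_ord0 /=; ring.
by rewrite big_ord_recr IH S_INR /=; ring.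
Qed.

Section EuclideanGeometry.
Variable n : nat.
Implicit Types (x y z : Cn n) (F G : 'I_n -> R).

Lemma sumR_scal a F : \big[Rplus/0]_(i < n) (a * F i) = a * \big[Rplus/0]_(i < n) F i.
Proof. by apply: (big_rec2 (fun u w => u = a * w)) => [|i u w _ ->]; ring. Qed.

Lemma sumR_le F G : (forall i, F i <= G i) ->
  \big[Rplus/0]_(i < n) F i <= \big[Rplus/0]_(i < n) G i.
Proof.
move=> FG; apply: (big_rec2 (fun u w => u <= w)) => [|i u w _]; last have := FG i; lra.
Qed.

Lemma sumR_ge0 F : (forall i, 0 <= F i) -> 0 <= \big[Rplus/0]_(i < n) F i.
Proof. by move=> F0; apply: (big_rec (fun u => 0 <= u)) => [|i u _]; last have := F0 i; lra. Qed.

Lemma sumR_le_const F c : (forall i, F i <= c) -> \big[Rplus/0]_(i < n) F i <= INR n * c.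
Proof. by move=> Fc; rewrite -sumR_const; apply: sumR_le. Qed.

Lemma rinner_ge0 x : 0 <= rinner x x.
Proof. by apply: sumR_ge0 => i; nra. Qed.

Lemma rinnerC x y : rinner x y = rinner y x.
Proof. by apply: eq_bigr => i _; ring. Qed.

Lemma rinnerDl x y z : rinner (vadd x y) z = rinner x z + rinner y z.
Proof. by rewrite /rinner -big_split; apply: eq_bigr => i _ /=; ring. Qed.

Lemma rinnerDr x y z : rinner z (vadd x y) = rinner z x + rinner z y.
Proof. by rewrite rinnerC rinnerDl !(rinnerC z). Qed.

Lemma rinnerZl a x y : rinner (rscal a x) y = a * rinner x y.
Proof. by rewrite /rinner -sumR_scal; apply: eq_bigr => i _ /=; ring. Qed.

Lemma rinnerZr a x y : rinner y (rscal a x) = a * rinner y x.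
Proof. by rewrite rinnerC rinnerZl rinnerC. Qed.

Lemma vnorm_ge0 x : 0 <= vnorm x.
Proof. exact: sqrt_pos. Qed.

Lemma vnorm_sqr x : vnorm x * vnorm x = rinner x x.
Proof. exact/sqrt_sqrt/rinner_ge0. Qed.

Lemma quadratic_discriminant a b c : 0 <= a -> 0 <= c ->
  (forall l, 0 <= a + 2 * l * b + l * l * c) -> b * b <= a * c.
Proof.
move=> a_ge0 c_ge0 H.
have [c0|c_neq0] := Req_dec c 0.
  have [b0|b_neq0] := Req_dec b 0; first by rewrite b0 c0; lra.
  have e : 2 * (- (a + 1) / (2 * b)) * b = - (a + 1) by field.
  by have := H (- (a + 1) / (2 * b)); rewrite c0 Rmult_0_r Rplus_0_r e; lra.
have e : a + 2 * (- b / c) * b + - b / c * (- b / c) * c = (a * c - b * b) / c by field.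
have := H (- b / c); rewrite e => h.
have : 0 <= (a * c - b * b) / c * c by apply: Rmult_le_pos; lra.
have -> : (a * c - b * b) / c * c = a * c - b * b by field.
lra.
Qed.

Lemma cauchy_schwarz x y : Rabs (rinner x y) <= vnorm x * vnorm y.
Proof.
have quad l : 0 <= rinner x x + 2 * l * rinner x y + l * l * rinner y y.
  have := rinner_ge0 (vadd x (rscal l y)).
  by rewrite !rinnerDl !rinnerDr !rinnerZl !rinnerZr (rinnerC y x); lra.
have := quadratic_discriminant (rinner_ge0 x) (rinner_ge0 y) quad.
rewrite -!vnorm_sqr => h; rewrite -[X in _ <= X]Rabs_right.
  by apply: Rsqr_le_abs_0; rewrite /Rsqr; lra.
by have := vnorm_ge0 x; have := vnorm_ge0 y; nra.
Qed.

Lemma vnormD x y : vnorm (vadd x y) <= vnorm x + vnorm y.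
Proof.
have := vnorm_ge0 x; have := vnorm_ge0 y => y0 x0.
apply: Rsqr_incr_0_var; last lra.
rewrite /Rsqr vnorm_sqr rinnerDl !rinnerDr -!vnorm_sqr (rinnerC y x).
by have := cauchy_schwarz x y; have := Rle_abs (rinner x y); nra.
Qed.

Lemma vsub_via x y z : vsub x z = vadd (vsub x y) (vsub y z).
Proof. by apply: functional_extensionality => i; congr pair => /=; ring. Qed.

Lemma vnorm_sub_triangle x y z : vnorm (vsub x z) <= vnorm (vsub x y) + vnorm (vsub y z).
Proof. by rewrite (vsub_via x y z); apply: vnormD. Qed.

Lemma vnorm_subC x y : vnorm (vsub x y) = vnorm (vsub y x).
Proof. by congr sqrt; apply: eq_bigr => i _ /=; ring. Qed.

Lemma vnormZ a x : vnorm (rscal a x) = Rabs a * vnorm x.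
Proof.
rewrite /vnorm rinnerZl rinnerZr -Rmult_assoc sqrt_mult ?sqrt_Rsqr_abs //.
- by nra.
- exact: rinner_ge0.
Qed.

Lemma vsub0 x : vsub x (@vzero n) = x.
Proof. by apply: functional_extensionality => i; rewrite /vsub /=; case: (x i) => a b /=; congr pair; ring. Qed.

Lemma vnorm_subxx x : vnorm (vsub x x) = 0.
Proof.
rewrite -sqrt_0; congr sqrt.
by apply: (big_rec (fun u => u = 0)) => // i u _ -> /=; ring.
Qed.

Lemma vnorm_sub_ge x y : Rabs (vnorm x - vnorm y) <= vnorm (vsub x y).
Proof.
have := vnorm_sub_triangle x y (@vzero n); have := vnorm_sub_triangle y x (@vzero n).
by rewrite !vsub0 (vnorm_subC y x) => h1 h2; apply: Rabs_le; lra.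
Qed.

Lemma rscal1 x : rscal 1 x = x.
Proof. by apply: functional_extensionality => i; rewrite /rscal; case: (x i) => a b /=; congr pair; ring. Qed.

Lemma rscalKV t x : t <> 0 -> rscal t (rscal (/ t) x) = x.
Proof.
move=> t_neq0; apply: functional_extensionality => i; rewrite /rscal.
by case: (x i) => a b /=; congr pair; field.
Qed.

Lemma vnormZ_sub t x y : vnorm (vsub (rscal t x) (rscal t y)) = Rabs t * vnorm (vsub x y).
Proof.
rewrite -vnormZ; congr vnorm.
by apply: functional_extensionality => i; rewrite /vsub /rscal /=; congr pair; ring.
Qed.

Lemma coord_le_vnorm x i : Rabs (fst (x i)) <= vnorm x /\ Rabs (snd (x i)) <= vnorm x.
Proof.
have coord_sqr : fst (x i) * fst (x i) + snd (x i) * snd (x i) <= rinner x x.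
  rewrite /rinner (bigD1 i) //=.
  have : 0 <= \big[Rplus/0]_(j < n | j != i) (fst (x j) * fst (x j) + snd (x j) * snd (x j)).
    by apply: (big_rec (fun u => 0 <= u)) => [|j u _]; nra.
  move=> h; rewrite -[X in X <= _]Rplus_0_r; exact: Rplus_le_compat_l.
by split; rewrite -sqrt_Rsqr_abs; apply: sqrt_le_1_alt; rewrite /Rsqr; nra.
Qed.

Lemma vnorm_le_coord x d : 0 <= d ->
  (forall i, Rabs (fst (x i)) <= d /\ Rabs (snd (x i)) <= d) -> vnorm x <= 2 * INR n * d.
Proof.
move=> d0 xd.
have sqr_le a : Rabs a <= d -> a * a <= d * d.
  by move=> h; have := Rsqr_abs a; rewrite /Rsqr; have := Rabs_pos a; nra.
have h1 : rinner x x <= INR n * (2 * (d * d)).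
  apply: sumR_le_const => i; have [/sqr_le h1 /sqr_le h2] := xd i; lra.
have h2 : INR n * (2 * (d * d)) <= (2 * INR n * d) * (2 * INR n * d).
  have [->|n_ge1] : INR n = 0 \/ 1 <= INR n.
    by case: (n) => [|m]; [left | right; rewrite S_INR; have := pos_INR m; lra].
  - lra.
  - nra.
rewrite /vnorm -(sqrt_square (2 * INR n * d)); last by have := pos_INR n; nra.
by apply: sqrt_le_1_alt; lra.
Qed.

End EuclideanGeometry.

Section Subspace.
Variables (n : nat) (L : Cn n -> Prop).
Hypothesis L_sub : is_complex_subspace L.

Lemma subspace_rscal a x : L x -> L (rscal a x).
Proof.
have [_ [_ L_cscal]] := L_sub.
have -> : rscal a x = cscal (a, 0) x.
  by apply: functional_extensionality => i; rewrite /rscal /cscal /Cmul /=; congr pair; ring.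
exact: L_cscal.
Qed.

Lemma subspace_vsub x y : L x -> L y -> L (vsub x y).
Proof.
have [_ [L_add _]] := L_sub => Lx Ly.
have -> : vsub x y = vadd x (rscal (-1) y).
  by apply: functional_extensionality => i; rewrite /vsub /vadd /rscal /Cadd /=; congr pair; ring.
by apply: L_add => //; apply: subspace_rscal.
Qed.

Lemma orth_projection_nearest pi z w : is_orth_projection L pi -> L w ->
  vnorm (vsub z (pi z)) <= vnorm (vsub z w).
Proof.
move=> pi_orth Lw; have [L_piz orth] := pi_orth z.
have := orth _ (subspace_vsub L_piz Lw).
rewrite (vsub_via z (pi z) w) /vnorm => orth0; apply: sqrt_le_1_alt.
rewrite rinnerDl !rinnerDr (rinnerC (vsub (pi z) w)) orth0.
by have := rinner_ge0 (vsub (pi z) w); lra.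
Qed.

End Subspace.

Lemma inv_pow2_pos k : 0 < / 2 ^ k.
Proof. by apply/Rinv_0_lt_compat/pow_lt; lra. Qed.

Lemma inv_pow2S k : / 2 ^ k.+1 = / 2 ^ k / 2.
Proof. by have := pow_lt 2 k; rewrite [2 ^ k.+1]/= => h; field; lra. Qed.

Lemma inv_pow2_small e : 0 < e -> exists K, forall k, (K <= k)%nat -> / 2 ^ k < e.
Proof.
move=> e_gt0; have [K [K_e K_gt0]] := archimed_cor1 e e_gt0.
exists K => k /leP K_k; apply: Rle_lt_trans K_e.
have pow2_gt : INR k + 1 <= 2 ^ k.
  elim: (k) => [|m IH]; first by rewrite /=; lra.
  by rewrite S_INR [2 ^ _]/=; have := pos_INR m; lra.
have := le_INR _ _ K_k; have := lt_0_INR K ltac:(lia).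
by move=> *; apply: Rinv_le_contravar; lra.
Qed.

Definition asbool (P : Prop) : bool := if excluded_middle_informative P then true else false.

Lemma asboolE (P : Prop) : asbool P = true <-> P.
Proof. by rewrite /asbool; case: excluded_middle_informative. Qed.

Section GridTrace.
Variable n : nat.

(* [-1,1] is cut into cells of length 1 / grid_res k; the factor
   2n + 1 makes grid_res_fine hold. *)
Definition grid_res k : nat := ((2 * n + 1) * Nat.pow 2 k)%nat.
Definition grid_cells k : nat := (2 * grid_res k + 1)%nat.

Lemma grid_resE k : INR (grid_res k) = (2 * INR n + 1) * 2 ^ k.
Proof.
have two : INR 2 = 2 by rewrite /=; ring.
by rewrite /grid_res mult_INR plus_INR mult_INR pow_INR two /=; ring.
Qed.

Lemma grid_res_gt0 k : 0 < INR (grid_res k).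
Proof. by rewrite grid_resE; have := pos_INR n; have := pow_lt 2 k; nra. Qed.

Lemma grid_res_fine k : 2 * INR n * / INR (grid_res k) < / 2 ^ k.
Proof.
rewrite grid_resE; have := pos_INR n; have := pow_lt 2 k ltac:(lra) => p n0.
apply: (Rmult_lt_reg_r ((2 * INR n + 1) * 2 ^ k)); first nra.
by field_simplify; lra.
Qed.

Definition cell k (y : R) : 'I_(grid_cells k).+1 :=
  inord (Z.to_nat (up (INR (grid_res k) * (y + 1)))).

Lemma cell_eq_close k y z : Rabs y <= 1 -> Rabs z <= 1 -> cell k y = cell k z ->
  Rabs (y - z) <= / INR (grid_res k).
Proof.
move=> y1 z1 yz; have M_gt0 := grid_res_gt0 k.
set M := INR (grid_res k) in M_gt0 yz *.
have abs_bounds a : Rabs a <= 1 -> -1 <= a <= 1.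
  by move=> h; have := Rle_abs a; have := Rle_abs (- a); rewrite Rabs_Ropp; lra.
have up_range u : 0 <= u <= 2 * M ->
    (0 < up u)%Z /\ (Z.to_nat (up u) < (grid_cells k).+1)%nat.
  move=> u_range; have [u1 u2] := archimed u; split; first by apply: lt_IZR; simpl; lra.
  have : (up u <= Z.of_nat (grid_cells k))%Z.
    by apply: le_IZR; rewrite -INR_IZR_INZ /grid_cells plus_INR mult_INR -/M /=; lra.
  by move=> h; apply/ltP; lia.
have [y_lo y_hi] := abs_bounds _ y1; have [z_lo z_hi] := abs_bounds _ z1.
have [uy_pos uy_lt] := up_range (M * (y + 1)) ltac:(nra).
have [uz_pos uz_lt] := up_range (M * (z + 1)) ltac:(nra).
have up_eq : up (M * (y + 1)) = up (M * (z + 1)).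
  by apply: Z2Nat.inj; [lia | lia | move/(congr1 (@nat_of_ord _)): yz; rewrite /cell !inordK].
have [a1 a2] := archimed (M * (y + 1)); have [b1 b2] := archimed (M * (z + 1)).
rewrite up_eq in a1 a2.
have Mdiff : Rabs (M * (y - z)) <= 1 by apply: Rabs_le; lra.
rewrite Rabs_mult Rabs_right in Mdiff; last lra.
apply: (Rmult_le_reg_l M) => //; rewrite Rinv_r; lra.
Qed.

Definition cellv k (a : Cn n) : {ffun 'I_n -> 'I_(grid_cells k).+1 * 'I_(grid_cells k).+1} :=
  [ffun i => (cell k (fst (a i)), cell k (snd (a i)))].

Definition trace k (A : Cn n -> Prop) :=
  [set g | asbool (exists a, A a /\ cellv k a = g)].

Lemma trace_eq_close k (A B : Cn n -> Prop) :
  (forall a, A a -> vnorm a = 1) -> (forall b, B b -> vnorm b = 1) ->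
  trace k A = trace k B -> forall a, A a -> exists b, B b /\ vnorm (vsub a b) < / 2 ^ k.
Proof.
move=> A1 B1 AB a Aa.
have : cellv k a \in trace k B by rewrite -AB inE; apply/asboolE; exists a.
rewrite inE => /asboolE [b [Bb ab]]; exists b; split => //.
apply: Rle_lt_trans (grid_res_fine k).
apply: vnorm_le_coord; first exact/Rlt_le/Rinv_0_lt_compat/grid_res_gt0.
move=> i; have := congr1 (fun f : {ffun _} => f i) ab; rewrite !ffunE => -[fst_eq snd_eq].
have [a_fst a_snd] := coord_le_vnorm a i; have [b_fst b_snd] := coord_le_vnorm b i.
rewrite A1 // in a_fst a_snd; rewrite B1 // in b_fst b_snd.
by split; apply: cell_eq_close.
Qed.

End GridTrace.

Definition infinitely_often (P : nat -> Prop) := forall N, exists j, (N <= j)%nat /\ P j.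

Lemma infinitely_often_fiber {T : finType} (f : nat -> T) (P : nat -> Prop) :
  infinitely_often P -> exists c, infinitely_often (fun j => P j /\ f j = c).
Proof.
move=> P_inf; apply: NNPP => no_fiber.
have bound c : exists N, forall j, (N <= j)%nat -> P j -> f j <> c.
  apply: NNPP => c_inf; apply: no_fiber; exists c => N.
  apply: NNPP => none; apply: c_inf; exists N => j Nj Pj fj; apply: none; by exists j.
pose N c := epsilon (inhabits 0%nat) (fun N => forall j, (N <= j)%nat -> P j -> f j <> c).
have N_spec c : forall j, (N c <= j)%nat -> P j -> f j <> c.
  exact: (epsilon_spec (inhabits 0%nat) _ (bound c)).
have [j [Nj Pj]] := P_inf (\max_(c : T) N c).
by apply: (N_spec (f j) j) => //; apply: leq_trans Nj; apply: leq_bigmax.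
Qed.

Section DiagonalSelection.
Variables (n : nat) (A : nat -> Cn n -> Prop).

Definition frequent_trace k (P : nat -> Prop) :=
  epsilon (inhabits (trace k (A 0%nat)))
    (fun c => infinitely_often (fun j => P j /\ trace k (A j) = c)).

Fixpoint agree k : nat -> Prop :=
  match k with
  | 0 => fun _ => True
  | k'.+1 => fun j => agree k' j /\ trace k' (A j) = frequent_trace k' (agree k')
  end.

Lemma agree_infinitely_often k : infinitely_often (agree k).
Proof.
elim: k => [|k IH]; first by move=> N; exists N.
exact: (epsilon_spec _ (fun c => infinitely_often (fun j => agree k j /\ trace k (A j) = c))
  (infinitely_often_fiber (fun j => trace k (A j)) IH)).
Qed.

Lemma agree_le k k' j : (k <= k')%nat -> agree k' j -> agree k j.
Proof.
move=> /subnK <-; elim: (k' - k)%nat => [|d IH] //.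
by rewrite addSn => -[/IH].
Qed.

Fixpoint diag k : nat :=
  match k with
  | 0 => 0%nat
  | k'.+1 => epsilon (inhabits 0%nat) (fun j => (diag k' < j)%nat /\ agree k'.+1 j)
  end.

Lemma diag_spec k : agree k (diag k) /\ (diag k < diag k.+1)%nat.
Proof.
have next k0 : (diag k0 < diag k0.+1)%nat /\ agree k0.+1 (diag k0.+1).
  exact: epsilon_spec (agree_infinitely_often k0.+1 (diag k0).+1).
split; last by case: (next k).
by case: k => [|k] //; case: (next k).
Qed.

Lemma diag_ge k : (k <= diag k)%nat.
Proof. by elim: k => [|k IH] //; apply: leq_ltn_trans IH (proj2 (diag_spec k)). Qed.

Lemma trace_diag_stable k k' : (k <= k')%nat ->
  trace k (A (diag k.+1)) = trace k (A (diag k'.+1)).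
Proof.
move=> kk'; have [[_ ->] _] := diag_spec k.+1.
by have [/(@agree_le k.+1) [//|_ ->] _] := diag_spec k'.+1.
Qed.

End DiagonalSelection.

Section Completeness.
Variable n : nat.
Implicit Types (u : nat -> Cn n) (d : Cn n).

Lemma Cn_coord_cv u d :
  (forall i, Un_cv (fun q => fst (u q i)) (fst (d i)) /\ Un_cv (fun q => snd (u q i)) (snd (d i))) ->
  forall eta, 0 < eta -> exists N, forall q, (N <= q)%nat -> vnorm (vsub (u q) d) <= eta.
Proof.
move=> u_cv eta eta_gt0; have n0 := pos_INR n.
pose e := eta / (2 * INR n + 1).
have e_gt0 : 0 < e by apply: Rdiv_lt_0_compat; lra.
have coord_close i : exists N, forall q, (N <= q)%nat ->
    Rabs (fst (u q i) - fst (d i)) <= e /\ Rabs (snd (u q i) - snd (d i)) <= e.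
  have [[N1 N1_cv] [N2 N2_cv]] := conj ((proj1 (u_cv i)) e e_gt0) ((proj2 (u_cv i)) e e_gt0).
  exists (maxn N1 N2) => q; rewrite geq_max => /andP [/leP q1 /leP q2].
  by split; apply: Rlt_le; [apply: N1_cv | apply: N2_cv].
pose N i := epsilon (inhabits 0%nat) (fun N => forall q, (N <= q)%nat ->
    Rabs (fst (u q i) - fst (d i)) <= e /\ Rabs (snd (u q i) - snd (d i)) <= e).
have N_spec i : forall q, (N i <= q)%nat ->
    Rabs (fst (u q i) - fst (d i)) <= e /\ Rabs (snd (u q i) - snd (d i)) <= e.
  exact: (epsilon_spec (inhabits 0%nat) _ (coord_close i)).
exists (\max_(i < n) N i) => q q_ge.
apply: Rle_trans (vnorm_le_coord _ (Rlt_le _ _ e_gt0) _) _.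
  by move=> i; apply: N_spec; apply: leq_trans q_ge; apply: leq_bigmax.
apply: (Rmult_le_reg_r (2 * INR n + 1)); first lra.
by rewrite /e; field_simplify; lra.
Qed.

Lemma Cn_cauchy_limit u (rho : nat -> R) :
  (forall p q, vnorm (vsub (u p) (u (p + q)%nat)) <= rho p) ->
  (forall e, 0 < e -> exists P, forall p, (P <= p)%nat -> rho p < e) ->
  exists d, forall p, vnorm (vsub (u p) d) <= rho p.
Proof.
move=> u_cauchy rho_small.
have u_close p q : (p <= q)%nat -> vnorm (vsub (u p) (u q)) <= rho p.
  by move=> /subnKC pq; have := u_cauchy p (q - p)%nat; rewrite pq.
have u_close2 e : 0 < e -> exists P, forall p q, (P <= p)%nat -> (P <= q)%nat ->
    vnorm (vsub (u p) (u q)) < e.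
  move=> e_gt0; have [P P_small] := rho_small (e / 2) ltac:(lra); exists P => p q p_ge q_ge.
  have := vnorm_sub_triangle (u p) (u P) (u q); rewrite (vnorm_subC (u p) (u P)).
  by have := u_close _ _ p_ge; have := u_close _ _ q_ge; have := P_small P (leqnn P); lra.
have coord_cauchy i : Cauchy_crit (fun p => fst (u p i)) /\ Cauchy_crit (fun p => snd (u p i)).
  split=> e /u_close2 [P P_close]; exists P => p q /leP p_ge /leP q_ge;
    have [fst_le snd_le] := coord_le_vnorm (vsub (u p) (u q)) i;
    have := P_close p q p_ge q_ge; rewrite /R_dist; simpl in fst_le, snd_le; lra.
pose d : Cn n := fun i => (proj1_sig (R_complete _ (proj1 (coord_cauchy i))),
                           proj1_sig (R_complete _ (proj2 (coord_cauchy i)))).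
have d_cv : forall eta, 0 < eta -> exists N, forall q, (N <= q)%nat -> vnorm (vsub (u q) d) <= eta.
  by apply: Cn_coord_cv => i; split; apply: proj2_sig.
exists d => p; apply: Rle_plus_epsilon => eta eta_gt0.
have [N N_close] := d_cv eta eta_gt0.
have := vnorm_sub_triangle (u p) (u (p + N)%nat) d.
have := u_close p (p + N)%nat (leq_addr _ _); have := N_close (p + N)%nat (leq_addl _ _).
lra.
Qed.

End Completeness.

Section HausdorffLimit.
Variables (n : nat) (C : nat -> Cn n -> Prop).
Hypothesis C_sphere : forall k a, C k a -> vnorm a = 1.
Hypothesis C_forward : forall {k k'}, (k <= k')%nat -> forall {a}, C k a ->
  exists b, C k' b /\ vnorm (vsub a b) < / 2 ^ k.
Hypothesis C_backward : forall {k k'}, (k <= k')%nat -> forall {b}, C k' b ->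
  exists a, C k a /\ vnorm (vsub a b) < / 2 ^ k.

Definition limit_set (d : Cn n) := vnorm d = 1 /\ forall e, 0 < e ->
  exists K, forall k, (K <= k)%nat -> exists a, C k a /\ vnorm (vsub a d) < e.

Lemma limit_set_closed : Defs.closed_set limit_set.
Proof.
move=> x x_adh; split.
  apply: cond_eq => e e_gt0; have [d [[d1 _] xd]] := x_adh e e_gt0.
  by have := vnorm_sub_ge x d; rewrite d1; lra.
move=> e e_gt0; have [d [[_ d_lim] xd]] := x_adh (e / 2) ltac:(lra).
have [K K_close] := d_lim (e / 2) ltac:(lra).
exists K => k Kk; have [a [Ca ad]] := K_close k Kk; exists a; split => //.
by have := vnorm_sub_triangle a d x; rewrite (vnorm_subC d x); lra.
Qed.

Section Chain.
Variables (j : nat) (a : Cn n).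
Hypothesis Ca : C j a.

Fixpoint chain p : Cn n :=
  match p with
  | 0 => a
  | p'.+1 => epsilon (inhabits a)
      (fun b => C (j + p'.+1) b /\ vnorm (vsub (chain p') b) < / 2 ^ (j + p'))
  end.

Lemma chain_spec p : C (j + p) (chain p) /\ vnorm (vsub (chain p) (chain p.+1)) < / 2 ^ (j + p).
Proof.
have next p0 : C (j + p0) (chain p0) ->
    C (j + p0.+1) (chain p0.+1) /\ vnorm (vsub (chain p0) (chain p0.+1)) < / 2 ^ (j + p0).
  move=> C_p0; have [b Cb] := C_forward (leqnSn (j + p0)) C_p0; rewrite -addnS in Cb.
  exact: (epsilon_spec (inhabits a) (fun b => C (j + p0.+1) b /\
     vnorm (vsub (chain p0) b) < / 2 ^ (j + p0)) (ex_intro _ b Cb)).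
have C_chain : forall p0, C (j + p0) (chain p0).
  by elim=> [|p0 /next []]; first by rewrite addn0.
by have [] := next p (C_chain p).
Qed.

Lemma chain_bound p q :
  vnorm (vsub (chain p) (chain (p + q))) <= 2 * / 2 ^ (j + p) - 2 * / 2 ^ (j + (p + q)).
Proof.
elim: q => [|q IH]; first by rewrite addn0 vnorm_subxx; lra.
have [_ step] := chain_spec (p + q).
have := vnorm_sub_triangle (chain p) (chain (p + q)) (chain (p + q).+1).
by rewrite !addnS inv_pow2S; lra.
Qed.

Lemma chain_limit : exists d, limit_set d /\ vnorm (vsub a d) <= 2 * / 2 ^ j.
Proof.
have [d d_lim] : exists d, forall p, vnorm (vsub (chain p) d) <= 2 * / 2 ^ (j + p).
  apply: Cn_cauchy_limit => [p q | e e_gt0].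
    by have := chain_bound p q; have := inv_pow2_pos (j + (p + q)); lra.
  have [K K_small] := @inv_pow2_small (e / 2) ltac:(lra); exists K => p Kp.
  by have := K_small (j + p)%nat (leq_trans Kp (leq_addl _ _)); lra.
exists d; split; last by have := d_lim 0%nat; rewrite addn0.
split.
  apply: cond_eq => e e_gt0; have [K K_small] := @inv_pow2_small (e / 2) ltac:(lra).
  have := K_small (j + K)%nat (leq_addl _ _); have := d_lim K.
  have := vnorm_sub_ge (chain K) d; rewrite (C_sphere (proj1 (chain_spec K))).
  by rewrite Rabs_minus_sym; lra.
move=> e e_gt0; have [K K_small] := @inv_pow2_small (e / 2) ltac:(lra).
exists (maxn j K) => k; rewrite geq_max => /andP [jk Kk].
exists (chain (k - j)); split; first by have [] := chain_spec (k - j); rewrite subnKC.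
by have := K_small k Kk; have := d_lim (k - j)%nat; rewrite subnKC //; lra.
Qed.

End Chain.

Lemma limit_set_hausdorff : hausdorff_limit C limit_set.
Proof.
move=> e e_gt0; have [K K_small] := @inv_pow2_small (e / 2) ltac:(lra).
exists K => j Kj; split.
  move=> a Ca; have [d [d_lim ad]] := chain_limit Ca.
  by exists d; split => //; have := K_small j Kj; lra.
move=> d [_ d_lim]; have [K' K'_close] := d_lim (e / 2) ltac:(lra).
have [b [Cb bd]] := K'_close (maxn j K') (leq_maxr _ _).
have [a [Ca ab]] := C_backward (leq_maxl j K') Cb.
exists a; split => //.
by have := vnorm_sub_triangle a b d; have := K_small j Kj; lra.
Qed.

End HausdorffLimit.

Theorem unit_sphere_hausdorff_selection n (A : nat -> Cn n -> Prop) :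
  (forall j a, A j a -> vnorm a = 1) ->
  exists (phi : nat -> nat) (D : Cn n -> Prop),
    (forall j, (j <= phi j)%nat) /\ (forall d, D d -> vnorm d = 1) /\
    Defs.closed_set D /\ hausdorff_limit (fun j => A (phi j)) D.
Proof.
move=> A_sphere; pose C k := A (diag A k.+1).
have C_sphere k a : C k a -> vnorm a = 1 by apply: A_sphere.
have C_forward k k' : (k <= k')%nat -> forall a, C k a ->
    exists b, C k' b /\ vnorm (vsub a b) < / 2 ^ k.
  by move=> kk'; apply: trace_eq_close; [exact: C_sphere | exact: C_sphere | exact: (trace_diag_stable A k k' kk')].
have C_backward k k' : (k <= k')%nat -> forall b, C k' b ->
    exists a, C k a /\ vnorm (vsub a b) < / 2 ^ k.
  move=> kk' b Cb; have [a [Ca ba]] := trace_eq_close (C_sphere k') (C_sphere k)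
    (esym (trace_diag_stable A k k' kk')) _ Cb.
  by exists a; rewrite vnorm_subC.
exists (fun j => diag A j.+1), (limit_set C); split; [|split; [|split]].
- by move=> j; apply: leq_trans (diag_ge A j.+1).
- by move=> d [].
- exact: limit_set_closed.
- exact: limit_set_hausdorff.
Qed.

Lemma direction_near_tangent_cone n (X L : Cn n -> Prop) (x : nat -> Cn n) :
  tangent_cone_at_infinity_is X L -> (forall k, X (x k)) -> (forall k, INR k < vnorm (x k)) ->
  forall delta, 0 < delta ->
    exists k d, L d /\ vnorm (vsub (rscal (/ vnorm (x k)) (x k)) d) < delta.
Proof.
move=> [_ cone_unique] Xx x_big delta delta_gt0.
pose t k := vnorm (x k).
have t_gt0 k : 0 < t k by have := pos_INR k; have := x_big k; rewrite /t; lra.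
pose A k y := exists z, X z /\ vnorm z = t k /\ y = rscal (/ t k) z.
have A_sphere k y : A k y -> vnorm y = 1.
  move=> [z [_ [z_t ->]]]; have := t_gt0 k => tk.
  by rewrite vnormZ z_t Rabs_right; [field | apply/Rle_ge/Rlt_le/Rinv_0_lt_compat]; lra.
have [phi [D [phi_ge [D_sphere [D_closed D_lim]]]]] := @unit_sphere_hausdorff_selection n A A_sphere.
have cone : is_tangent_cone_at_infinity X (fun z => exists s v, s >= 0 /\ D v /\ z = rscal s v).
  exists (fun j => t (phi j)), D; split; first by move=> j; apply: t_gt0.
  split; last by do 3![split => //].
  move=> M; have [N N_M] := INR_unbounded M; exists N => j Nj.
  have /leP := leq_trans Nj (phi_ge j) => /le_INR.
  by have := x_big (phi j); rewrite /t; lra.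
have [J J_close] := D_lim delta delta_gt0; have [near_D _] := J_close J (leqnn J).
have [d [Dd yd]] := near_D (rscal (/ t (phi J)) (x (phi J)))
  (ex_intro _ (x (phi J)) (conj (Xx _) (conj erefl erefl))).
exists (phi J), d; split => //.
by apply/(cone_unique _ cone); exists 1, d; rewrite rscal1; split => //; lra.
Qed.

Lemma tangent_subspace_asymptotic n (X L : Cn n -> Prop) (pi : Cn n -> Cn n) :
  tangent_cone_at_infinity_is X L -> is_complex_subspace L -> is_orth_projection L pi ->
  forall delta, 0 < delta -> exists M, forall x, X x -> vnorm x > M ->
    vnorm (vsub x (pi x)) <= delta * vnorm x.
Proof.
move=> cone L_sub pi_orth delta delta_gt0; apply: NNPP => no_bound.
have far k : exists x, X x /\ INR k < vnorm x /\ delta * vnorm x < vnorm (vsub x (pi x)).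
  apply: NNPP => none; apply: no_bound; exists (INR k) => x Xx x_big.
  by apply: Rnot_lt_le => x_far; apply: none; exists x.
pose x k := epsilon (inhabits (@vzero n))
  (fun x => X x /\ INR k < vnorm x /\ delta * vnorm x < vnorm (vsub x (pi x))).
have x_spec k : X (x k) /\ INR k < vnorm (x k) /\
    delta * vnorm (x k) < vnorm (vsub (x k) (pi (x k))).
  exact: (epsilon_spec _ _ (far k)).
have [k [d [Ld yd]]] := @direction_near_tangent_cone n X L x cone (fun k => proj1 (x_spec k))
  (fun k => proj1 (proj2 (x_spec k))) _ delta_gt0.
have [_ [x_big x_far]] := x_spec k; set t := vnorm (x k) in x_big x_far yd.
have t_gt0 : 0 < t by have := pos_INR k; lra.
have := orth_projection_nearest L_sub (x k) _ pi_orth (subspace_rscal L_sub t _ Ld).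
have -> : vnorm (vsub (x k) (rscal t d)) = t * vnorm (vsub (rscal (/ t) (x k)) d).
  by rewrite -{1}(rscalKV (x k) (Rgt_not_eq _ _ t_gt0)) vnormZ_sub Rabs_right //; lra.
have : t * vnorm (vsub (rscal (/ t) (x k)) d) < t * delta by apply: Rmult_lt_compat_l.
lra.
Qed.

Lemma asymp_linear_of_relative_defect n (g p : R -> Cn n) (v : Cn n) :
  (forall delta, 0 < delta -> exists T, forall t, t > T ->
     vnorm (vsub (g t) (p t)) <= delta * vnorm (g t)) ->
  asymp_linear p v -> asymp_linear g v.
Proof.
move=> g_near_p p_asymp e e_gt0; have V0 := vnorm_ge0 v; set V := vnorm v in V0.
pose delta := e / (2 * (e + 2 * V) + 2).
have delta_gt0 : 0 < delta by apply: Rdiv_lt_0_compat; lra.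
have delta_le : delta <= 1 / 2 /\ delta * (e + 2 * V) <= e / 2.
  have den : 0 < 2 * (e + 2 * V) + 2 by lra.
  by split; apply: (Rmult_le_reg_r (2 * (e + 2 * V) + 2)) => //;
    rewrite /delta; field_simplify; try lra; nra.
have [T1 T1_near] := g_near_p delta delta_gt0.
have [T2 T2_asymp] := p_asymp (e / 2) ltac:(lra).
exists (Rmax (Rmax T1 T2) 0) => t; rewrite /Rgt !Rmax_Rlt => -[[t1 t2] t0].
have gp := T1_near t t1; have ptv := T2_asymp t t2.
have tv : vnorm (rscal t v) = t * V by rewrite vnormZ -/V Rabs_right; lra.
have g_triangle := vnorm_sub_triangle (g t) (rscal t v) (@vzero n).
have p_triangle := vnorm_sub_triangle (g t) (p t) (rscal t v).
rewrite !vsub0 tv in g_triangle.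
have half : delta * vnorm (g t) <= 1 / 2 * vnorm (g t).
  by apply: Rmult_le_compat_r; [apply: vnorm_ge0 | lra].
have g_bound : delta * vnorm (g t) <= delta * ((e + 2 * V) * t).
  by apply: Rmult_le_compat_l; lra.
have : delta * ((e + 2 * V) * t) <= e / 2 * t.
  by rewrite -Rmult_assoc; apply: Rmult_le_compat_r; lra.
lra.
Qed.

Theorem mainTheorem11 (n : nat) (X L : Cn n -> Prop) (pi : Cn n -> Cn n)
  (eps : R) (gamma : R -> Cn n) (v : Cn n) :
  is_complex_algebraic X ->
  unbounded X ->
  tangent_cone_at_infinity_is X L ->
  is_complex_subspace L ->
  is_orth_projection L pi ->
  (* gamma is an arc (continuous) on (eps, +oo) with values in X *)
  (forall t, t > eps -> forall i : 'I_n,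
     continuity_pt (fun s => fst (gamma s i)) t /\
     continuity_pt (fun s => snd (gamma s i)) t) ->
  (forall t, t > eps -> X (gamma t)) ->
  (forall M, exists T, forall t, t > T -> vnorm (gamma t) > M) ->
  L v ->
  asymp_linear (fun t => pi (gamma t)) v ->
  asymp_linear gamma v.
Proof.
(* Algebraicity only serves, in the paper, to make the tangent cone at infinity unique,
   which the hypothesis on L states directly. *)
move=> _ _ cone L_sub pi_orth _ X_gamma gamma_far _.
apply: asymp_linear_of_relative_defect => delta delta_gt0.
have [M M_near] := tangent_subspace_asymptotic cone L_sub pi_orth delta_gt0.
have [T T_far] := gamma_far M.
exists (Rmax T eps) => t; rewrite /Rgt Rmax_Rlt => -[tT teps].
by apply: M_near; [apply: X_gamma | apply: T_far].
Qed.
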